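(* Let $G$ be an $N$-player normal-form game in which each player has $T$ actions, and let $f$ be a deterministic, permutation-equivariant embedding function, with $f(G) = (\mathbf{A}_1,\dots,\mathbf{A}_N)$, $\mathbf{A}_p = ({\bm{a}}^1_p,\dots,{\bm{a}}^T_p)$. If actions $a^i_p$ and $a^j_q$ are strategically equivalent in $G$, then their embeddings coincide: ${\bm{a}}^i_p = {\bm{a}}^j_q$.
   Context: A normal-form game $G$ with $N$ players, each player $p$ having actions $\mathcal{A}_p = \{a^1_p,\dots,a^T_p\}$, is given by payoff functions $G_p:\mathcal{A}=\mathcal{A}_1\times\dots\times\mathcal{A}_N\to\mathbb{R}$. A strong isomorphism $\phi=((\tau_p)_{p\in[N]},\omega)$ consists of a permutation $\omega$ of the players and, for each player $p$, a bijection $\tau_p$ from the actions of $p$ to the actions of $\omega(p)$; it maps $G$ to the game $G'=\phi(G)$ defined by $G'_{\omega(p)}(b) = G_p(a)$ for all players $p$ and joint actions $a$, where $b$ is the joint action with $b_{\omega(r)}=\tau_r(a_r)$ for every player $r$. A strong automorphism of $G$ is a strong isomorphism with $\phi(G)=G$. An embedding function $f$ assigns to each game a tuple $(\mathbf{A}_1,\dots,\mathbf{A}_N)$ of action embeddings ${\bm{a}}^t_p\in\mathbb{R}^D$, one per action; $\phi$ acts on such a tuple by placing the embedding of action $a^i_p$ at the position of action $\tau_p(a^i_p)$ of player $\omega(p)$. $f$ is (permutation-)equivariant if $f(\phi(G))=\phi(f(G))$ for every game $G$ and every strong isomorphism $\phi$; deterministic means $f$ is a (single-valued) function of the game. Two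 actions $a^i_p$ and $a^j_q$ are strategically equivalent in $G$ if there is a strong automorphism $\phi$ of $G$ with $\omega(p)=q$ and $\tau_p(a^i_p)=a^j_q$. *)

From mathcomp Require Import all_boot all_fingroup.
From Stdlib Require Import Reals.
Set Implicit Arguments. Unset Strict Implicit. Unset Printing Implicit Defensive.

Definition joint (N T : nat) := 'I_N -> 'I_T.
Definition game (N T : nat) := 'I_N -> joint N T -> R.
(* Action embeddings in R^D: emb p t is the vector a^t_p. *)
Definition emb (N T D : nat) := 'I_N -> 'I_T -> ('I_D -> R).

(* A strong isomorphism: permutation omega of the players, and for each
   player p a bijection tau p from actions of p to actions of omega p
   (all action sets are 'I_T, so tau p is a permutation of 'I_T). *)
Record strong_iso (N T : nat) := StrongIso {
  si_tau : 'I_N -> {perm 'I_T};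
  si_omega : {perm 'I_N} }.

(* phi(G)_{omega p}(b) = G_p(a) with b_{omega r} = tau_r(a_r), i.e.
   phi(G)_q(b) = G_{omega^-1 q}(r |-> tau_r^-1(b_{omega r})). *)
Definition act_game N T (phi : strong_iso N T) (G : game N T) : game N T :=
  fun q b => G ((si_omega phi)^-1 q)%g
               (fun r => ((si_tau phi r)^-1)%g (b (si_omega phi r))).

(* phi places the embedding of a^i_p at position tau_p(a^i_p) of omega(p):
   phi(E)_{omega p}(tau_p i) = E_p(i). *)
Definition act_emb N T D (phi : strong_iso N T) (E : emb N T D) : emb N T D :=
  fun q j => let p := ((si_omega phi)^-1 q)%g in
             E p (((si_tau phi p)^-1)%g j).

Definition strong_automorphism N T (phi : strong_iso N T) (G : game N T) :=
  act_game phi G = G.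

Definition equivariant N T D (f : game N T -> emb N T D) :=
  forall (G : game N T) (phi : strong_iso N T), f (act_game phi G) = act_emb phi (f G).

Definition strategically_equivalent N T (G : game N T) (p : 'I_N) (i : 'I_T)
    (q : 'I_N) (j : 'I_T) :=
  exists phi : strong_iso N T,
    strong_automorphism phi G /\ si_omega phi p = q /\ si_tau phi p i = j.

From mathcomp Require Import all_boot all_fingroup.
From Stdlib Require Import Reals.

Lemma act_emb_image {N T D : nat} (phi : strong_iso N T) (E : emb N T D) p i :
  act_emb phi E (si_omega phi p) (si_tau phi p i) = E p i.
Proof. by rewrite /act_emb !permK. Qed.

Lemma equivariant_automorphism_fixed {N T D : nat} {f : game N T -> emb N T D}
    {G : game N T} {phi : strong_iso N T} :
  equivariant f -> strong_automorphism phi G -> act_emb phi (f G) = f G.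
Proof. by move=> f_equiv autG; rewrite -f_equiv autG. Qed.

Theorem theorem1 (N T D : nat) (f : game N T -> emb N T D) (G : game N T)
  (p q : 'I_N) (i j : 'I_T) :
  equivariant f -> strategically_equivalent G p i q j -> f G p i = f G q j.
Proof.
move=> f_equiv [phi [autG [<- <-]]].
by rewrite -{2}(equivariant_automorphism_fixed f_equiv autG) act_emb_image.
Qed.
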